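(* Let $\mathcal{O}_1$ and $\mathcal{O}_2$ be classes of ordinals, each of which is a ''class of plump ordinals'' in the following sense: for $i \in \{1,2\}$ and every ordinal $\alpha$, we have $\alpha \in \mathcal{O}_i$ if and only if both (a) $\alpha \subseteq \mathcal{O}_i$, and (b) for every $\beta \in \alpha$, every set $\gamma \subseteq \beta$ with $\gamma \in \mathcal{O}_i$ satisfies $\gamma \in \alpha$. Then $\mathcal{O}_1 = \mathcal{O}_2$.
   Context: The setting is intuitionistic set theory with set induction (e.g. intuitionistic Kripke–Platek set theory $\mathrm{IKP}$). An ordinal is a transitive set all of whose elements are transitive; $\mathrm{Ord}$ is the class of ordinals. Condition (b) says $\mathcal{P}(\beta) \cap \mathcal{O}_i \subseteq \alpha$. *)

(* A "universe of sets" is a type U with a membership relation mem; classes are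
   predicates U -> Prop. *)

(** Set induction (∈-induction), the schema available in IKP, for arbitrary classes. *)
Definition set_induction {U : Type} (mem : U -> U -> Prop) : Prop :=
  forall P : U -> Prop,
    (forall x, (forall y, mem y x -> P y) -> P x) -> forall x, P x.

Definition subset {U : Type} (mem : U -> U -> Prop) (x y : U) : Prop :=
  forall z, mem z x -> mem z y.

Definition transitive_set {U : Type} (mem : U -> U -> Prop) (x : U) : Prop :=
  forall y, mem y x -> subset mem y x.

Definition ordinal {U : Type} (mem : U -> U -> Prop) (x : U) : Prop :=
  transitive_set mem x /\ forall y, mem y x -> transitive_set mem y.

Definition plump_class {U : Type} (mem : U -> U -> Prop) (O : U -> Prop) : Prop :=
  (forall x, O x -> ordinal mem x) /\
  (forall alpha, ordinal mem alpha ->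
     (O alpha <->
        ((forall beta, mem beta alpha -> O beta) /\
         (forall beta, mem beta alpha ->
            forall gamma, subset mem gamma beta -> O gamma -> mem gamma alpha)))).


(* By ∈-induction on x, O1 and O2 agree on every subset of x.  Membership of
   an ordinal γ ⊆ x in O_i is decided by conditions (a) and (b), which only ask
   whether elements of γ, and subsets of such elements, lie in O_i; these are
   subsets of elements of x, on which O1 and O2 agree by induction.  Taking
   γ = x gives the theorem. *)

Section PlumpClassUniqueness.

Variables (U : Type) (mem : U -> U -> Prop).

Definition agree_on_subsets (O1 O2 : U -> Prop) (x : U) : Prop :=
  forall g, subset mem g x -> (O1 g <-> O2 g).

Lemma subset_refl (x : U) : subset mem x x.
Proof. intros z Hz; exact Hz. Qed.

Lemma agree_on_subsets_sym (O1 O2 : U -> Prop) (x : U) :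
  agree_on_subsets O1 O2 x -> agree_on_subsets O2 O1 x.
Proof. intros H g Hg; apply iff_sym, H, Hg. Qed.

Lemma plump_class_subset_incl (O1 O2 : U -> Prop) :
  plump_class mem O1 -> plump_class mem O2 ->
  forall x, (forall y, mem y x -> agree_on_subsets O1 O2 y) ->
  forall g, subset mem g x -> O1 g -> O2 g.
Proof.
  intros [O1_ord O1_char] [_ O2_char] x IH g Hgx O1g.
  pose proof (O1_ord g O1g) as ord_g.
  destruct (proj1 (O1_char g ord_g) O1g) as [O1_elems O1_plump].
  apply (proj2 (O2_char g ord_g)); split.
  - intros b Hb.
    apply (IH b (Hgx b Hb) b (subset_refl b)), O1_elems, Hb.
  - intros b Hb d Hdb O2d.
    apply (O1_plump b Hb d Hdb), (IH b (Hgx b Hb) d Hdb), O2d.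
Qed.

Lemma plump_classes_agree_on_subsets (O1 O2 : U -> Prop) :
  set_induction mem -> plump_class mem O1 -> plump_class mem O2 ->
  forall x, agree_on_subsets O1 O2 x.
Proof.
  intros Hind P1 P2.
  apply (Hind (agree_on_subsets O1 O2)).
  intros x IH g Hgx; split.
  - exact (plump_class_subset_incl O1 O2 P1 P2 x IH g Hgx).
  - apply (plump_class_subset_incl O2 O1 P2 P1 x); [|exact Hgx].
    intros y Hy; apply agree_on_subsets_sym, IH, Hy.
Qed.

End PlumpClassUniqueness.

Theorem proposition1p1 (U : Type) (mem : U -> U -> Prop)
  (Hind : set_induction mem) (O1 O2 : U -> Prop) :
  plump_class mem O1 -> plump_class mem O2 ->
  forall x, O1 x <-> O2 x.
Proof.
  intros P1 P2 x.
  exact (plump_classes_agree_on_subsets U mem O1 O2 Hind P1 P2 x x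
           (subset_refl U mem x)).
Qed.
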